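(* The set $$S=\{e\in\omega : W_e \text{ is self-constructing}\}$$ is $\Pi^0_2$-complete; that is, $S$ is a $\Pi^0_2$ set and every $\Pi^0_2$ subset of $\omega$ is many-one reducible to $S$. In particular, the set $\mathrm{Tot}=\{e : W_e=\omega\}$ is many-one reducible to $S$.
   Context: $\omega$ denotes the set of natural numbers $\{0,1,2,\dots\}$. $\langle \psi_e : e\in\omega\rangle$ is a standard (acceptable, in the sense of Rogers) computable numbering of all partial computable functions from $\omega$ to $\omega$, and $W_e$ denotes the domain of $\psi_e$. A nonempty computably enumerable set $A\subseteq\omega$ is called self-constructing if $W_e=A$ for every $e\in A$. *)

From Stdlib Require Import Arith.

Definition pair (a b : nat) : nat := (a + b) * (a + b + 1) / 2 + b.

Fixpoint unpair (n : nat) : nat * nat :=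
  match n with
  | 0 => (0, 0)
  | S n' => let (a, b) := unpair n' in
            match a with
            | S a' => (a', S b)
            | 0 => (S b, 0)
            end
  end.

Inductive code : Type :=
| CZero : code
| CSucc : code
| CId   : code
| CFst  : code
| CSnd  : code
| CPair : code -> code -> code (* x |-> <f x, g x> *)
| CComp : code -> code -> code (* x |-> f (g x) *)
| CRec  : code -> code -> code (* h<x,0> = f x ; h<x,n+1> = g <x,<n,h<x,n>>> *)
| CMu   : code -> code.        (* x |-> least y with f<x,y> = 0 *)

Inductive evalR : code -> nat -> nat -> Prop :=
| ev_zero x : evalR CZero x 0
| ev_succ x : evalR CSucc x (S x)
| ev_id x : evalR CId x x
| ev_fst x : evalR CFst x (fst (unpair x))
| ev_snd x : evalR CSnd x (snd (unpair x))
| ev_pair f g x a b : evalR f x a -> evalR g x b -> evalR (CPair f g) x (pair a b)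
| ev_comp f g x y z : evalR g x y -> evalR f y z -> evalR (CComp f g) x z
| ev_rec f g x n y :
    rec_graph f g x n y -> evalR (CRec f g) (pair x n) y
| ev_mu f x y : mu_from f x 0 y -> evalR (CMu f) x y
with rec_graph : code -> code -> nat -> nat -> nat -> Prop :=
| rg_zero f g x y : evalR f x y -> rec_graph f g x 0 y
| rg_succ f g x n y z :
    rec_graph f g x n y -> evalR g (pair x (pair n y)) z ->
    rec_graph f g x (S n) z
with mu_from : code -> nat -> nat -> nat -> Prop :=
| mu_here f x n : evalR f (pair x n) 0 -> mu_from f x n n
| mu_next f x n k y :
    evalR f (pair x n) (S k) -> mu_from f x (S n) y -> mu_from f x n y.

Fixpoint decode_aux (fuel n : nat) : code :=
  match fuel with
  | 0 => CZero
  | S fuel' =>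
    match n with
    | 0 => CZero
    | 1 => CSucc
    | 2 => CId
    | 3 => CFst
    | 4 => CSnd
    | _ =>
      let m := n - 5 in
      let r := m / 4 in
      let a := fst (unpair r) in
      let b := snd (unpair r) in
      match m mod 4 with
      | 0 => CPair (decode_aux fuel' a) (decode_aux fuel' b)
      | 1 => CComp (decode_aux fuel' a) (decode_aux fuel' b)
      | 2 => CRec (decode_aux fuel' a) (decode_aux fuel' b)
      | _ => CMu (decode_aux fuel' a)
      end
    end
  end.

Definition decode (n : nat) : code := decode_aux (S n) n.

Definition psi (e x y : nat) : Prop := evalR (decode e) x y.

Definition total_code (c : code) : Prop := forall x, exists y, evalR c x y.

Definition computes_total (c : code) : Prop := total_code c.

Definition CE (A : nat -> Prop) : Prop :=
  exists e, forall x, A x <-> exists y, psi e x y.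

Definition Pi02 (A : nat -> Prop) : Prop :=
  exists c : code, total_code c /\
    forall n, A n <-> forall x, exists y, evalR c (pair n (pair x y)) 0.

Definition many_one (A B : nat -> Prop) : Prop :=
  exists c : code, total_code c /\
    forall n, exists m, evalR c n m /\ (A n <-> B m).

(* A numbering of partial functions, given by graphs: phi e x y <-> phi_e(x) = y *)
Definition numbering := nat -> nat -> nat -> Prop.

Definition functional_numbering (phi : numbering) : Prop :=
  forall e x y y', phi e x y -> phi e x y' -> y = y'.

Definition acceptable (phi : numbering) : Prop :=
  functional_numbering phi /\
  (exists f : code, total_code f /\
     forall e, exists e', evalR f e e' /\ forall x y, phi e' x y <-> psi e x y) /\
  (exists g : code, total_code g /\
     forall e, exists e', evalR g e e' /\ forall x y, psi e' x y <-> phi e x y).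

Definition W (phi : numbering) (e : nat) : nat -> Prop :=
  fun x => exists y, phi e x y.

Definition self_constructing (phi : numbering) (A : nat -> Prop) : Prop :=
  (exists a, A a) /\ CE A /\
  forall e, A e -> forall x, W phi e x <-> A x.

Definition S_set (phi : numbering) : nat -> Prop :=
  fun e => self_constructing phi (W phi e).

Definition Tot (phi : numbering) : nat -> Prop :=
  fun e => forall x, W phi e x.

From Stdlib Require Import Arith Bool Lia PeanoNat List Classical ClassicalEpsilon.

(* The standard numbering [psi] is the explicit interpreter of mu-recursive
   programs, so every computability fact used is proved here
   from the definitions:
   - Cantor pairing is a bijection and [decode] inverts an explicit [encode];
   - evaluation is deterministic, and mu-free programs are total, evaluated
     by the structural interpreter [ev];
   - a library of mu-free programs (arithmetic, tests with 0 as "true",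
     bounded quantification over coded lists) yields Kleene's normal form
     [psi e x y <-> exists d, ev kleene_T <e,<x,<y,d>>> = 0], where [d]
     codes a derivation of the evaluation as a list of judgements;
   - upper bound: membership in [Tot] and in [S_set] unfolds, through the
     normal form, into "forall u, exists v, (mu-free test) (e,u,v)";
   - lower bound: for a Pi^0_2 set [A n <-> forall k, exists y, R(n,k,y)],
     a self-referential program (it receives its own code as a parameter)
     gives indices [P n k] with [W (P n k) = {P n j | j}] when
     [exists y, R(n,k,y)] and [W (P n k)] empty otherwise; hence
     [A n <-> W (P n 0)] is self-constructing.
   Acceptability of [phi] transports both directions from [psi] to [phi]. *)

Lemma triangle_succ s : (s + 1) * (s + 1 + 1) / 2 = s * (s + 1) / 2 + (s + 1).
Proof.
  replace ((s + 1) * (s + 1 + 1)) with (s * (s + 1) + (s + 1) * 2) by ring.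
  rewrite Nat.div_add by lia. lia.
Qed.

Lemma pair_succ_diag a b : S (pair (S a) b) = pair a (S b).
Proof. unfold pair. replace (a + S b) with (S a + b) by lia. lia. Qed.

Lemma pair_succ_next_diag b : S (pair 0 b) = pair (S b) 0.
Proof.
  unfold pair. rewrite !Nat.add_0_l, !Nat.add_0_r.
  replace (S b) with (b + 1) by lia. rewrite triangle_succ. lia.
Qed.

Lemma pair_ge a b : a + b <= pair a b.
Proof.
  unfold pair. assert (a + b <= (a + b) * (a + b + 1) / 2); [|lia].
  apply Nat.div_le_lower_bound; [lia|]. nia.
Qed.

Lemma unpair_pair a b : unpair (pair a b) = (a, b).
Proof.
  remember (pair a b) as n eqn:E. revert a b E.
  induction n as [|m IH]; intros a b E.
  - pose proof (pair_ge a b). replace a with 0 by lia. replace b with 0 by lia.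
    reflexivity.
  - destruct b as [|b'], a as [|a']; try discriminate E.
    + rewrite <- pair_succ_next_diag in E. injection E as E.
      simpl. rewrite (IH _ _ E). reflexivity.
    + rewrite <- pair_succ_diag in E. injection E as E.
      simpl. rewrite (IH _ _ E). reflexivity.
    + rewrite <- pair_succ_diag in E. injection E as E.
      simpl. rewrite (IH _ _ E). reflexivity.
Qed.

Lemma fst_unpair a b : fst (unpair (pair a b)) = a.
Proof. rewrite unpair_pair; reflexivity. Qed.

Lemma snd_unpair a b : snd (unpair (pair a b)) = b.
Proof. rewrite unpair_pair; reflexivity. Qed.

Lemma pair_unpair n : pair (fst (unpair n)) (snd (unpair n)) = n.
Proof.
  induction n as [|m IH]; [reflexivity|].
  simpl. destruct (unpair m) as [[|a'] b]; simpl in *.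
  - rewrite <- pair_succ_next_diag. congruence.
  - rewrite <- pair_succ_diag. congruence.
Qed.

Lemma pair_inj a b c d : pair a b = pair c d -> a = c /\ b = d.
Proof.
  intros H. pose proof (unpair_pair a b) as E.
  rewrite H, unpair_pair in E. injection E; auto.
Qed.

Lemma fst_unpair_le n : fst (unpair n) <= n.
Proof. rewrite <- (pair_unpair n) at 2. pose proof (pair_ge (fst (unpair n)) (snd (unpair n))). lia. Qed.

Lemma snd_unpair_le n : snd (unpair n) <= n.
Proof. rewrite <- (pair_unpair n) at 2. pose proof (pair_ge (fst (unpair n)) (snd (unpair n))). lia. Qed.

Ltac unpair_simpl := repeat (first [rewrite fst_unpair | rewrite snd_unpair]).
Ltac unpair_simpl_in H := repeat (first [rewrite fst_unpair in H | rewrite snd_unpair in H]).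

(* The Goedel numbering: [decode] is inverted by an explicit [encode], and
   every number is either a basic code or [5 + 4 * <a, b> + d] with d < 4. *)

Lemma decode_aux_step f m : decode_aux (S f) (5 + m) =
  match m mod 4 with
  | 0 => CPair (decode_aux f (fst (unpair (m / 4)))) (decode_aux f (snd (unpair (m / 4))))
  | 1 => CComp (decode_aux f (fst (unpair (m / 4)))) (decode_aux f (snd (unpair (m / 4))))
  | 2 => CRec (decode_aux f (fst (unpair (m / 4)))) (decode_aux f (snd (unpair (m / 4))))
  | _ => CMu (decode_aux f (fst (unpair (m / 4))))
  end.
Proof. cbn - [Nat.div Nat.modulo]. rewrite Nat.sub_0_r. reflexivity. Qed.

Lemma decode_aux_stable f1 : forall f2 n, n < f1 -> n < f2 -> decode_aux f1 n = decode_aux f2 n.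
Proof.
  induction f1 as [|f1 IH]; intros f2 n H1 H2; [lia|].
  destruct f2 as [|f2]; [lia|].
  destruct n as [|[|[|[|[|n']]]]]; try reflexivity.
  change (S (S (S (S (S n'))))) with (5 + n').
  rewrite !decode_aux_step.
  assert (n' / 4 <= n') by (apply Nat.Div0.div_le_upper_bound; lia).
  pose proof (fst_unpair_le (n' / 4)). pose proof (snd_unpair_le (n' / 4)).
  rewrite (IH f2 (fst (unpair (n' / 4)))), (IH f2 (snd (unpair (n' / 4)))) by lia.
  reflexivity.
Qed.

Lemma decode_compound a b d : d < 4 ->
  decode (5 + 4 * pair a b + d) =
  match d with
  | 0 => CPair (decode a) (decode b)
  | 1 => CComp (decode a) (decode b)
  | 2 => CRec (decode a) (decode b)
  | _ => CMu (decode a)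
  end.
Proof.
  intros Hd. unfold decode. pose proof (pair_ge a b).
  replace (5 + 4 * pair a b + d) with (5 + (4 * pair a b + d)) by lia.
  rewrite decode_aux_step.
  assert (Hq : (4 * pair a b + d) / 4 = pair a b).
  { rewrite Nat.mul_comm, Nat.div_add_l by lia. rewrite Nat.div_small by lia. lia. }
  assert (Hr : (4 * pair a b + d) mod 4 = d).
  { rewrite Nat.add_comm, Nat.mul_comm, Nat.Div0.mod_add. apply Nat.mod_small; lia. }
  rewrite Hq, Hr, unpair_pair. cbn [fst snd].
  rewrite (decode_aux_stable _ (S a) a), (decode_aux_stable _ (S b) b) by lia.
  destruct d as [|[|[|[|]]]]; try reflexivity; lia.
Qed.

Fixpoint encode (c : code) : nat :=
  match c with
  | CZero => 0 | CSucc => 1 | CId => 2 | CFst => 3 | CSnd => 4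
  | CPair f g => 5 + 4 * pair (encode f) (encode g) + 0
  | CComp f g => 5 + 4 * pair (encode f) (encode g) + 1
  | CRec f g => 5 + 4 * pair (encode f) (encode g) + 2
  | CMu f => 5 + 4 * pair (encode f) 0 + 3
  end.

Lemma decode_encode c : decode (encode c) = c.
Proof.
  induction c; try reflexivity; cbn [encode];
    rewrite decode_compound by lia; congruence.
Qed.

Lemma decode_inv e c : decode e = c ->
  match c with
  | CZero => e = 0 | CSucc => e = 1 | CId => e = 2 | CFst => e = 3 | CSnd => e = 4
  | CPair f g => exists a b, e = 5 + 4 * pair a b + 0 /\ decode a = f /\ decode b = g
  | CComp f g => exists a b, e = 5 + 4 * pair a b + 1 /\ decode a = f /\ decode b = g
  | CRec f g => exists a b, e = 5 + 4 * pair a b + 2 /\ decode a = f /\ decode b = g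
  | CMu f => exists a b, e = 5 + 4 * pair a b + 3 /\ decode a = f
  end.
Proof.
  intros H. destruct (le_lt_dec e 4) as [Hs|Hs].
  - destruct e as [|[|[|[|[|e]]]]]; try lia; rewrite <- H; reflexivity.
  - set (r := (e - 5) / 4). set (d := (e - 5) mod 4).
    assert (Hd : d < 4) by (apply Nat.mod_upper_bound; lia).
    assert (He : e = 5 + 4 * pair (fst (unpair r)) (snd (unpair r)) + d).
    { rewrite pair_unpair. pose proof (Nat.div_mod (e - 5) 4). unfold r, d. lia. }
    rewrite He, decode_compound in H by exact Hd. subst c. rewrite He.
    destruct d as [|[|[|[|d]]]]; try lia; eauto.
Qed.

Scheme evalR_mind := Minimality for evalR Sort Prop
with rec_graph_mind := Minimality for rec_graph Sort Prop
with mu_from_mind := Minimality for mu_from Sort Prop.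
Combined Scheme eval_mutind from evalR_mind, rec_graph_mind, mu_from_mind.

Lemma eval_deterministic :
  (forall c x y, evalR c x y -> forall y', evalR c x y' -> y = y') /\
  (forall f g x n y, rec_graph f g x n y -> forall y', rec_graph f g x n y' -> y = y') /\
  (forall f x n y, mu_from f x n y -> forall y', mu_from f x n y' -> y = y').
Proof.
  apply eval_mutind; intros;
  match goal with H : _ |- _ => inversion H; subst end;
  repeat match goal with
  | E : pair _ _ = pair _ _ |- _ => apply pair_inj in E; destruct E; subst
  | IH : forall y', evalR ?c ?x y' -> ?o = y', H : evalR ?c ?x ?o' |- _ =>
      tryif unify o o' then fail else (specialize (IH _ H); subst)
  | IH : forall y', rec_graph ?f ?g ?x ?n y' -> ?o = y', H : rec_graph ?f ?g ?x ?n ?o' |- _ =>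
      tryif unify o o' then fail else (specialize (IH _ H); subst)
  | IH : forall y', mu_from ?f ?x ?n y' -> ?o = y', H : mu_from ?f ?x ?n ?o' |- _ =>
      tryif unify o o' then fail else (specialize (IH _ H); subst)
  end; try discriminate; auto.
Qed.

Lemma evalR_det c x y y' : evalR c x y -> evalR c x y' -> y = y'.
Proof. intros; eapply (proj1 eval_deterministic); eauto. Qed.

Definition implements (c : code) (F : nat -> nat) : Prop := forall x, evalR c x (F x).

Lemma implements_det c F x y : implements c F -> evalR c x y -> y = F x.
Proof. intros H1 H2. eapply evalR_det; eauto. Qed.

Lemma implements_total c F : implements c F -> total_code c.
Proof. intros H x. eauto. Qed.

Lemma implements_ext c F G : implements c F -> (forall x, F x = G x) -> implements c G.
Proof. intros H E x. rewrite <- E. auto. Qed.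

Lemma implements_comp f g F G : implements f F -> implements g G ->
  implements (CComp f g) (fun x => F (G x)).
Proof. intros Hf Hg x. econstructor; eauto. Qed.

Lemma implements_pair f g F G : implements f F -> implements g G ->
  implements (CPair f g) (fun x => pair (F x) (G x)).
Proof. intros Hf Hg x. constructor; auto. Qed.

Lemma implements_zero c F z : implements c F -> (evalR c z 0 <-> F z = 0).
Proof.
  intros H. split; intros E.
  - symmetry. eapply implements_det; eauto.
  - rewrite <- E. apply H.
Qed.

Lemma total_function c : total_code c -> { F : nat -> nat | implements c F }.
Proof.
  intros H.
  exists (fun x => proj1_sig (constructive_indefinite_description _ (H x))).
  intros x. destruct (constructive_indefinite_description _ (H x)). simpl. auto.
Qed.

(* Mu-free programs are primitive recursive: the structural interpreter
   [ev] computes them, so they are total. *)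

Fixpoint rec_loop (F G : nat -> nat) (x n : nat) : nat :=
  match n with
  | 0 => F x
  | S m => G (pair x (pair m (rec_loop F G x m)))
  end.

Fixpoint ev (c : code) (x : nat) : nat :=
  match c with
  | CZero => 0
  | CSucc => S x
  | CId => x
  | CFst => fst (unpair x)
  | CSnd => snd (unpair x)
  | CPair f g => pair (ev f x) (ev g x)
  | CComp f g => ev f (ev g x)
  | CRec f g => rec_loop (ev f) (ev g) (fst (unpair x)) (snd (unpair x))
  | CMu _ => 0
  end.

Fixpoint mufree (c : code) : bool :=
  match c with
  | CPair f g | CComp f g | CRec f g => mufree f && mufree g
  | CMu _ => false
  | _ => true
  end.

Lemma implements_rec_graph f g F G : implements f F -> implements g G ->
  forall x n, rec_graph f g x n (rec_loop F G x n).
Proof.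
  intros Hf Hg x n. induction n; simpl.
  - constructor. apply Hf.
  - econstructor; eauto.
Qed.

Lemma ev_correct c : mufree c = true -> implements c (ev c).
Proof.
  induction c; simpl; intros H x;
    repeat match goal with H : _ && _ = true |- _ => apply andb_prop in H; destruct H end;
    try discriminate.
  1-7: econstructor; solve [apply IHc1; auto | apply IHc2; auto].
  - rewrite <- (pair_unpair x) at 1. constructor. apply implements_rec_graph; auto.
Qed.

Lemma mu_from_zero f F x n y : implements f F -> mu_from f x n y -> F (pair x y) = 0.
Proof.
  intros Hf H. induction H as [f x n H|f x n k y _ _ IH]; auto.
  symmetry. apply (implements_det _ _ _ _ Hf H).
Qed.

Lemma mu_from_exists f F x w : implements f F -> F (pair x w) = 0 ->
  forall d n, n + d = w -> exists y, mu_from f x n y.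
Proof.
  intros Hf Hw d. induction d; intros n Hn.
  - exists n. constructor. replace n with w by lia. rewrite <- Hw. apply Hf.
  - destruct (F (pair x n)) eqn:E.
    + exists n. constructor. rewrite <- E. apply Hf.
    + destruct (IHd (S n)) as [y Hy]; [lia|]. exists y. econstructor; eauto.
      rewrite <- E. apply Hf.
Qed.

Lemma mu_halts f F x : implements f F ->
  ((exists y, evalR (CMu f) x y) <-> exists w, F (pair x w) = 0).
Proof.
  intros Hf. split.
  - intros [y Hy]. inversion Hy as [| | | | | | | |f' x' y' Hm]; subst.
    exists y. apply (mu_from_zero _ _ _ _ _ Hf Hm).
  - intros [w Hw]. destruct (mu_from_exists f F x w Hf Hw w 0 eq_refl) as [y Hy].
    exists y. constructor. auto.
Qed.

(* A library of mu-free programs.  Tests return [0] for "true". *)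

Fixpoint const (n : nat) : code :=
  match n with 0 => CZero | S m => CComp CSucc (const m) end.

Lemma ev_const n x : ev (const n) x = n.
Proof. induction n; simpl; auto. Qed.

Lemma mufree_const n : mufree (const n) = true.
Proof. induction n; simpl; auto. Qed.

Definition if_zero (c t e : code) : code :=
  CComp (CRec CFst (CComp CSnd CFst)) (CPair (CPair t e) c).

Lemma ev_if_zero c t e x :
  ev (if_zero c t e) x = match ev c x with 0 => ev t x | S _ => ev e x end.
Proof. cbn [ev if_zero]. unpair_simpl. destruct (ev c x); cbn [rec_loop ev]; unpair_simpl; reflexivity. Qed.

Definition pred_code : code := CComp (CRec CZero (CComp CFst CSnd)) (CPair CZero CId).

Lemma ev_pred_code x : ev pred_code x = pred x.
Proof. cbn [ev pred_code]. unpair_simpl. destruct x; cbn [rec_loop ev]; unpair_simpl; reflexivity. Qed.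

Definition sub_code : code := CRec CId (CComp pred_code (CComp CSnd CSnd)).

Lemma ev_sub_code a b : ev sub_code (pair a b) = a - b.
Proof.
  cbn [ev sub_code]. unpair_simpl.
  induction b; cbn [rec_loop ev]; [lia|]. unpair_simpl. rewrite ev_pred_code, IHb. lia.
Qed.

Definition add_code : code := CRec CId (CComp CSucc (CComp CSnd CSnd)).

Lemma ev_add_code a b : ev add_code (pair a b) = a + b.
Proof.
  cbn [ev add_code]. unpair_simpl.
  induction b; cbn [rec_loop ev]; [lia|]. unpair_simpl. rewrite IHb. lia.
Qed.

Definition app2 (h a b : code) : code := CComp h (CPair a b).

Lemma ev_app2 h a b x : ev (app2 h a b) x = ev h (pair (ev a x) (ev b x)).
Proof. reflexivity. Qed.

Definition and_test (c1 c2 : code) : code := if_zero c1 c2 (const 1).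
Definition or_test (c1 c2 : code) : code := if_zero c1 (const 0) c2.
Definition not_test (c : code) : code := if_zero c (const 1) (const 0).
Definition eq_test (a b : code) : code := and_test (app2 sub_code a b) (app2 sub_code b a).

Lemma ev_and_test c1 c2 x : ev (and_test c1 c2) x = 0 <-> ev c1 x = 0 /\ ev c2 x = 0.
Proof. unfold and_test. rewrite ev_if_zero. destruct (ev c1 x); rewrite ?ev_const; intuition congruence. Qed.

Lemma ev_or_test c1 c2 x : ev (or_test c1 c2) x = 0 <-> ev c1 x = 0 \/ ev c2 x = 0.
Proof. unfold or_test. rewrite ev_if_zero. destruct (ev c1 x); rewrite ?ev_const; intuition congruence. Qed.

Lemma ev_not_test c x : ev (not_test c) x = 0 <-> ev c x <> 0.
Proof. unfold not_test. rewrite ev_if_zero. destruct (ev c x); rewrite ?ev_const; intuition congruence. Qed.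

Lemma ev_eq_test a b x : ev (eq_test a b) x = 0 <-> ev a x = ev b x.
Proof. unfold eq_test. rewrite ev_and_test, !ev_app2, !ev_sub_code. lia. Qed.

Fixpoint enc (l : list nat) : nat :=
  match l with nil => 0 | h :: t => S (pair h (enc t)) end.

Lemma enc_surj L : exists l, enc l = L.
Proof.
  induction L as [L IH] using (well_founded_induction lt_wf).
  destruct L as [|m]; [exists nil; reflexivity|].
  destruct (IH (snd (unpair m))) as [t Ht]. { pose proof (snd_unpair_le m). lia. }
  exists (fst (unpair m) :: t). simpl. rewrite Ht, pair_unpair. reflexivity.
Qed.

Lemma length_le_enc l : length l <= enc l.
Proof. induction l; simpl; auto. pose proof (pair_ge a (enc l)). lia. Qed.

(* Bounded quantification over a coded list: [P] holds at every element,
   where [P] may also inspect the tail following the element. *)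

Fixpoint all_suffixes (P : nat -> list nat -> Prop) (l : list nat) : Prop :=
  match l with nil => True | h :: t => P h t /\ all_suffixes P t end.

(* One step of the scan.  Its input is <<x, L>, <m, <acc, cur>>>: [acc] is
   the verdict so far and [cur] codes the remaining list; the step tests
   [Pc] on <x, <head, tail>> and moves to the tail. *)
Definition scan_step (Pc : code) : code :=
  let input_acc := CComp CFst (CComp CSnd CSnd) in
  let input_cur := CComp CSnd (CComp CSnd CSnd) in
  let head := CComp CFst (CComp pred_code input_cur) in
  let tail := CComp CSnd (CComp pred_code input_cur) in
  CPair (and_test input_acc
           (if_zero input_cur (const 0) (CComp Pc (CPair (CComp CFst CFst) (CPair head tail)))))
        tail.

(* [all_list Pc] on <x, enc l> runs [enc l + 1 >= length l] scan steps. *)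
Definition all_list (Pc : code) : code :=
  CComp CFst (CComp (CRec (CPair (const 0) CSnd) (scan_step Pc))
                    (CPair CId (CComp CSucc CSnd))).

Lemma scan_step_nil Pc x L m acc :
  let s := ev (scan_step Pc) (pair (pair x L) (pair m (pair acc 0))) in
  (fst (unpair s) = 0 <-> acc = 0) /\ snd (unpair s) = 0.
Proof.
  cbv zeta. unfold scan_step. cbn [ev]. unpair_simpl. rewrite ev_pred_code.
  rewrite ev_and_test, ev_if_zero. cbn [ev]. unpair_simpl.
  rewrite ev_const. split; [tauto|reflexivity].
Qed.

Lemma scan_step_cons Pc x L m acc h t :
  let s := ev (scan_step Pc) (pair (pair x L) (pair m (pair acc (enc (h :: t))))) in
  (fst (unpair s) = 0 <-> acc = 0 /\ ev Pc (pair x (pair h (enc t))) = 0) /\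
  snd (unpair s) = enc t.
Proof.
  cbv zeta. unfold scan_step. cbn [ev enc]. unpair_simpl. rewrite ev_pred_code.
  cbn [Nat.pred]. unpair_simpl. rewrite ev_and_test, ev_if_zero. cbn [ev]. unpair_simpl.
  rewrite !ev_pred_code. cbn [Nat.pred]. unpair_simpl. tauto.
Qed.

Lemma scan_step_counter Pc X m s :
  ev (scan_step Pc) (pair X (pair m s)) = ev (scan_step Pc) (pair X (pair 0 s)).
Proof. unfold scan_step, and_test, if_zero. cbn [ev]. unpair_simpl. reflexivity. Qed.

Lemma scan_iter Pc x L (P : nat -> list nat -> Prop) :
  (forall h t, ev Pc (pair x (pair h (enc t))) = 0 <-> P h t) ->
  forall k l s, length l <= k -> snd (unpair s) = enc l ->
  (fst (unpair (Nat.iter k (fun s => ev (scan_step Pc) (pair (pair x L) (pair 0 s))) s)) = 0 <->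
   fst (unpair s) = 0 /\ all_suffixes P l).
Proof.
  intros HP k. induction k as [|k IH]; intros l s Hk Hs.
  - destruct l; [cbn; tauto|cbn in Hk; lia].
  - rewrite Nat.iter_succ_r. rewrite <- (pair_unpair s), Hs.
    destruct l as [|h t].
    + destruct (scan_step_nil Pc x L 0 (fst (unpair s))) as [H1 H2].
      rewrite (IH nil); [|cbn; lia|exact H2]. cbn [all_suffixes]. unpair_simpl. tauto.
    + destruct (scan_step_cons Pc x L 0 (fst (unpair s)) h t) as [H1 H2].
      rewrite (IH t); [|cbn in Hk; lia|exact H2]. cbn [all_suffixes]. unpair_simpl.
      rewrite H1, HP. tauto.
Qed.

Lemma ev_all_list Pc (P : nat -> list nat -> Prop) x l :
  (forall h t, ev Pc (pair x (pair h (enc t))) = 0 <-> P h t) ->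
  (ev (all_list Pc) (pair x (enc l)) = 0 <-> all_suffixes P l).
Proof.
  intros HP. unfold all_list. cbn [ev]. unpair_simpl.
  set (X := pair x (enc l)).
  assert (Hiter : forall k, rec_loop (ev (CPair (const 0) CSnd)) (ev (scan_step Pc)) X k =
    Nat.iter k (fun s => ev (scan_step Pc) (pair X (pair 0 s))) (pair 0 (enc l))).
  { induction k as [|k IH]; cbn [rec_loop Nat.iter].
    - cbn [ev]. rewrite ev_const. unfold X. unpair_simpl. reflexivity.
    - rewrite IH. apply scan_step_counter. }
  rewrite Hiter. unfold X at 1. rewrite (scan_iter Pc x (enc l) P HP _ l).
  - unpair_simpl. tauto.
  - unfold X. unpair_simpl. pose proof (length_le_enc l). lia.
  - unpair_simpl. reflexivity.
Qed.

(* Derivations.  A judgement <tag, p, q, x, n, y> asserts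
   [evalR (decode p) x y] (tag 0), [rec_graph (decode p) (decode q) x n y]
   (tag 1) or [mu_from (decode p) x n y] (tag 2). *)

Definition judgement (t p q x n y : nat) : nat := pair t (pair p (pair q (pair x (pair n y)))).

Definition holds (J : nat) : Prop :=
  let t := fst (unpair J) in
  let r1 := snd (unpair J) in let p := fst (unpair r1) in
  let r2 := snd (unpair r1) in let q := fst (unpair r2) in
  let r3 := snd (unpair r2) in let x := fst (unpair r3) in
  let r4 := snd (unpair r3) in let n := fst (unpair r4) in let y := snd (unpair r4) in
  match t with
  | 0 => evalR (decode p) x y
  | 1 => rec_graph (decode p) (decode q) x n y
  | 2 => mu_from (decode p) x n y
  | _ => False
  end.

Lemma holds_judgement t p q x n y : holds (judgement t p q x n y) <->
  match t with
  | 0 => evalR (decode p) x y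
  | 1 => rec_graph (decode p) (decode q) x n y
  | 2 => mu_from (decode p) x n y
  | _ => False
  end.
Proof. unfold holds, judgement. cbv zeta. unpair_simpl. tauto. Qed.

(* A trace is a list of lines <J, <a, <b, z>>>: a judgement [J] together with
   witnesses (indices [a], [b] of subprograms and an intermediate value [z]).
   [J] occurs in a trace if it is the judgement of one of its lines. *)

Definition line (t p q x n y a b z : nat) : nat := pair (judgement t p q x n y) (pair a (pair b z)).

Lemma line_surj h : exists t p q x n y a b z, h = line t p q x n y a b z.
Proof.
  unfold line, judgement.
  rewrite <- (pair_unpair h). set (J := fst (unpair h)). set (w := snd (unpair h)).
  rewrite <- (pair_unpair J), <- (pair_unpair (snd (unpair J))),
    <- (pair_unpair (snd (unpair (snd (unpair J))))),
    <- (pair_unpair (snd (unpair (snd (unpair (snd (unpair J))))))),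
    <- (pair_unpair (snd (unpair (snd (unpair (snd (unpair (snd (unpair J))))))))),
    <- (pair_unpair w), <- (pair_unpair (snd (unpair w))).
  eauto 20.
Qed.

Definition in_trace (J : nat) (t : list nat) : Prop := exists h, In h t /\ fst (unpair h) = J.

Lemma in_trace_app_l J l1 l2 : in_trace J l1 -> in_trace J (l1 ++ l2).
Proof. intros [h [H1 H2]]. exists h. split; auto. apply in_or_app; auto. Qed.

Lemma in_trace_app_r J l1 l2 : in_trace J l2 -> in_trace J (l1 ++ l2).
Proof. intros [h [H1 H2]]. exists h. split; auto. apply in_or_app; auto. Qed.

Definition in_trace_code : code :=
  not_test (all_list (not_test (eq_test (CComp CFst (CComp CFst CSnd)) CFst))).

Lemma ev_in_trace_code J t : ev in_trace_code (pair J (enc t)) = 0 <-> in_trace J t.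
Proof.
  unfold in_trace_code. rewrite ev_not_test.
  rewrite (ev_all_list _ (fun h _ => fst (unpair h) <> J)).
  - assert (Hall : forall l, all_suffixes (fun h _ => fst (unpair h) <> J) l <->
                             forall h, In h l -> fst (unpair h) <> J).
    { induction l; cbn; [tauto|]. rewrite IHl. firstorder congruence. }
    rewrite Hall. unfold in_trace. split.
    + intros H. apply NNPP. intros H2. apply H. intros h Hh E. apply H2. eauto.
    + intros [h [H1 H2]] H. apply (H h H1 H2).
  - intros h t'. rewrite ev_not_test, ev_eq_test. cbn [ev]. unpair_simpl. tauto.
Qed.

(* Programs reading the fields of the checker's input <x0, <line, rest>>. *)
Definition f_rest : code := CComp CSnd CSnd.
Definition f_judgement : code := CComp CFst (CComp CFst CSnd).
Definition f_witness : code := CComp CSnd (CComp CFst CSnd).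
Definition f_tag : code := CComp CFst f_judgement.
Definition f_p : code := CComp CFst (CComp CSnd f_judgement).
Definition f_q : code := CComp CFst (CComp CSnd (CComp CSnd f_judgement)).
Definition f_x : code := CComp CFst (CComp CSnd (CComp CSnd (CComp CSnd f_judgement))).
Definition f_n : code :=
  CComp CFst (CComp CSnd (CComp CSnd (CComp CSnd (CComp CSnd f_judgement)))).
Definition f_y : code :=
  CComp CSnd (CComp CSnd (CComp CSnd (CComp CSnd (CComp CSnd f_judgement)))).
Definition f_a : code := CComp CFst f_witness.
Definition f_b : code := CComp CFst (CComp CSnd f_witness).
Definition f_z : code := CComp CSnd (CComp CSnd f_witness).

Section LineFields.
Variables (x0 t p q x n y a b z r : nat).
Let I := pair x0 (pair (line t p q x n y a b z) r).
Ltac read_field := unfold I, line, judgement; cbv [f_rest f_judgement f_witness f_tag f_p f_q f_x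
  f_n f_y f_a f_b f_z]; cbn [ev]; unpair_simpl; reflexivity.
Lemma ev_f_rest : ev f_rest I = r. Proof. read_field. Qed.
Lemma ev_f_tag : ev f_tag I = t. Proof. read_field. Qed.
Lemma ev_f_p : ev f_p I = p. Proof. read_field. Qed.
Lemma ev_f_q : ev f_q I = q. Proof. read_field. Qed.
Lemma ev_f_x : ev f_x I = x. Proof. read_field. Qed.
Lemma ev_f_n : ev f_n I = n. Proof. read_field. Qed.
Lemma ev_f_y : ev f_y I = y. Proof. read_field. Qed.
Lemma ev_f_a : ev f_a I = a. Proof. read_field. Qed.
Lemma ev_f_b : ev f_b I = b. Proof. read_field. Qed.
Lemma ev_f_z : ev f_z I = z. Proof. read_field. Qed.
End LineFields.

Definition times4 (c : code) : code := app2 add_code (app2 add_code c c) (app2 add_code c c).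
Definition index_code (d : nat) (ca cb : code) : code :=
  app2 add_code (const (5 + d)) (times4 (CPair ca cb)).

Lemma ev_index_code d ca cb x : ev (index_code d ca cb) x = 5 + 4 * pair (ev ca x) (ev cb x) + d.
Proof. unfold index_code, times4. rewrite !ev_app2, !ev_add_code, ev_const. cbn [ev]. lia. Qed.

(* The line checker.  [in_rest J] tests that [J] occurs in the rest of the
   trace; a line is correct when its judgement is an axiom, or follows by one
   rule of [evalR] / [rec_graph] / [mu_from] from judgements further down. *)
Definition mk_judgement (t p q x n y : code) : code :=
  CPair t (CPair p (CPair q (CPair x (CPair n y)))).
Definition in_rest (j : code) : code := CComp in_trace_code (CPair j f_rest).
Definition pred_of (c : code) : code := CComp pred_code c.
Definition offset : code := app2 sub_code f_p (index_code 0 f_a f_b).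

Definition compound_check : code :=
  and_test (eq_test f_p (app2 add_code (index_code 0 f_a f_b) offset))
  (if_zero offset
    (and_test (in_rest (mk_judgement (const 0) f_a (const 0) f_x (const 0) (CComp CFst f_y)))
              (in_rest (mk_judgement (const 0) f_b (const 0) f_x (const 0) (CComp CSnd f_y))))
  (if_zero (pred_of offset)
    (and_test (in_rest (mk_judgement (const 0) f_b (const 0) f_x (const 0) f_z))
              (in_rest (mk_judgement (const 0) f_a (const 0) f_z (const 0) f_y)))
  (if_zero (pred_of (pred_of offset))
    (in_rest (mk_judgement (const 1) f_a f_b (CComp CFst f_x) (CComp CSnd f_x) f_y))
  (if_zero (pred_of (pred_of (pred_of offset)))
    (in_rest (mk_judgement (const 2) f_a (const 0) f_x (const 0) f_y))
    (const 1))))).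

Definition eval_check : code :=
  if_zero f_p (eq_test f_y (const 0))
  (if_zero (pred_of f_p) (eq_test f_y (CComp CSucc f_x))
  (if_zero (pred_of (pred_of f_p)) (eq_test f_y f_x)
  (if_zero (pred_of (pred_of (pred_of f_p))) (eq_test f_y (CComp CFst f_x))
  (if_zero (pred_of (pred_of (pred_of (pred_of f_p)))) (eq_test f_y (CComp CSnd f_x))
    compound_check)))).

Definition rec_check : code :=
  if_zero f_n (in_rest (mk_judgement (const 0) f_p (const 0) f_x (const 0) f_y))
  (and_test (in_rest (mk_judgement (const 1) f_p f_q f_x (pred_of f_n) f_z))
            (in_rest (mk_judgement (const 0) f_q (const 0)
                        (CPair f_x (CPair (pred_of f_n) f_z)) (const 0) f_y))).

Definition mu_check : code :=
  or_test (and_test (eq_test f_y f_n)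
                    (in_rest (mk_judgement (const 0) f_p (const 0) (CPair f_x f_n) (const 0) (const 0))))
          (and_test (in_rest (mk_judgement (const 0) f_p (const 0) (CPair f_x f_n) (const 0) (CComp CSucc f_z)))
                    (in_rest (mk_judgement (const 2) f_p f_q f_x (CComp CSucc f_n) f_y))).

Definition line_check : code :=
  if_zero f_tag eval_check
  (if_zero (pred_of f_tag) rec_check
  (if_zero (pred_of (pred_of f_tag)) mu_check (const 1))).

Definition line_spec (tag p q x n y a b z : nat) (M : nat -> Prop) : Prop :=
 match tag with
 | 0 => match p with
        | 0 => y = 0 | 1 => y = S x | 2 => y = x | 3 => y = fst (unpair x)
        | 4 => y = snd (unpair x)
        | _ => 5 + 4 * pair a b <= p /\
               match p - (5 + 4 * pair a b) with
               | 0 => M (judgement 0 a 0 x 0 (fst (unpair y))) /\ M (judgement 0 b 0 x 0 (snd (unpair y)))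
               | 1 => M (judgement 0 b 0 x 0 z) /\ M (judgement 0 a 0 z 0 y)
               | 2 => M (judgement 1 a b (fst (unpair x)) (snd (unpair x)) y)
               | 3 => M (judgement 2 a 0 x 0 y)
               | _ => False end
        end
 | 1 => match n with
        | 0 => M (judgement 0 p 0 x 0 y)
        | S n' => M (judgement 1 p q x n' z) /\ M (judgement 0 q 0 (pair x (pair n' z)) 0 y) end
 | 2 => (y = n /\ M (judgement 0 p 0 (pair x n) 0 0)) \/
        (M (judgement 0 p 0 (pair x n) 0 (S z)) /\ M (judgement 2 p q x (S n) y))
 | _ => False
 end.

Section LineCheck.
Variables (x0 t p q x n y a b z : nat) (l : list nat).
Let I := pair x0 (pair (line t p q x n y a b z) (enc l)).

Lemma ev_in_rest j : ev (in_rest j) I = 0 <-> in_trace (ev j I) l.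
Proof. unfold in_rest. cbn [ev]. unfold I at 2. rewrite ev_f_rest. apply ev_in_trace_code. Qed.

Lemma ev_mk_judgement c1 c2 c3 c4 c5 c6 : ev (mk_judgement c1 c2 c3 c4 c5 c6) I =
  judgement (ev c1 I) (ev c2 I) (ev c3 I) (ev c4 I) (ev c5 I) (ev c6 I).
Proof. reflexivity. Qed.

Lemma ev_pred_of c : ev (pred_of c) I = pred (ev c I).
Proof. apply ev_pred_code. Qed.

Lemma ev_offset : ev offset I = p - (5 + 4 * pair a b).
Proof.
  unfold offset. rewrite ev_app2, ev_sub_code, ev_index_code.
  unfold I. rewrite ev_f_p, ev_f_a, ev_f_b. lia.
Qed.

Lemma ev_base : ev (index_code 0 f_a f_b) I = 5 + 4 * pair a b.
Proof. rewrite ev_index_code. unfold I. rewrite ev_f_a, ev_f_b. lia. Qed.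

End LineCheck.

Section LineCheckSpec.
Local Opaque and_test or_test not_test eq_test in_rest mk_judgement const offset pred_of
  index_code.

Ltac check_simpl := repeat (first [ rewrite ev_f_tag | rewrite ev_f_p | rewrite ev_f_q
  | rewrite ev_f_x | rewrite ev_f_n | rewrite ev_f_y | rewrite ev_f_a | rewrite ev_f_b
  | rewrite ev_f_z | rewrite ev_pred_of | rewrite ev_offset | rewrite ev_base
  | rewrite ev_if_zero | rewrite ev_const | rewrite ev_and_test | rewrite ev_or_test
  | rewrite ev_eq_test | rewrite ev_in_rest | rewrite ev_mk_judgement | rewrite ev_app2
  | rewrite ev_add_code | progress cbn [ev] ]).

Ltac check_close := try tauto; try (split; [discriminate|tauto]); try (split; [intros; lia|tauto]).

Lemma ev_line_check x0 t p q x n y a b z l :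
  ev line_check (pair x0 (pair (line t p q x n y a b z) (enc l))) = 0 <-> line_spec t p q x n y a b z (fun J => in_trace J l).
Proof.
  unfold line_check. check_simpl. cbn [Nat.pred].
  destruct t as [|[|[|t]]]; cbn [Nat.pred]; unfold line_spec.
  - unfold eval_check. check_simpl. cbn [Nat.pred].
    destruct p as [|[|[|[|[|p']]]]]; cbn [Nat.pred]; check_simpl; try tauto.
    unfold compound_check. check_simpl.
    remember (S (S (S (S (S p')))) - (5 + 4 * pair a b)) as d.
    assert (Hd : S (S (S (S (S p')))) = 5 + 4 * pair a b + d <->
                 5 + 4 * pair a b <= S (S (S (S (S p'))))) by lia.
    rewrite Hd. apply and_iff_compat_l.
    destruct d as [|[|[|[|d]]]]; cbn [Nat.pred]; check_simpl; check_close.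
  - unfold rec_check. check_simpl. destruct n; cbn [Nat.pred]; check_simpl; check_close.
  - unfold mu_check. check_simpl. check_close.
  - check_simpl. check_close.
Qed.
End LineCheckSpec.

Definition line_ok (h : nat) (t : list nat) : Prop := ev line_check (pair 0 (pair h (enc t))) = 0.
Definition valid_trace (l : list nat) : Prop := all_suffixes line_ok l.

Lemma line_spec_mono t p q x n y a b z (M1 M2 : nat -> Prop) :
  (forall J, M1 J -> M2 J) -> line_spec t p q x n y a b z M1 -> line_spec t p q x n y a b z M2.
Proof.
  intros HM H. unfold line_spec in *.
  destruct t as [|[|[|t]]]; try tauto.
  - destruct p as [|[|[|[|[|p]]]]]; try tauto.
    destruct H as [H1 H2]. split; auto.
    destruct (S (S (S (S (S p)))) - (5 + 4 * pair a b)) as [|[|[|[|]]]]; firstorder.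
  - destruct n; firstorder.
  - firstorder.
Qed.

Lemma line_ok_mono h t t' : (forall J, in_trace J t -> in_trace J t') -> line_ok h t -> line_ok h t'.
Proof.
  intros HM. destruct (line_surj h) as (tg & p & q & x & n & y & a & b & z & ->).
  unfold line_ok. rewrite !ev_line_check. apply line_spec_mono; auto.
Qed.

Lemma valid_trace_app l1 l2 : valid_trace l1 -> valid_trace l2 -> valid_trace (l1 ++ l2).
Proof.
  unfold valid_trace. induction l1 as [|h t IH]; cbn; auto.
  intros [H1 H2] H3. split; auto.
  eapply line_ok_mono; [|exact H1]. intros; apply in_trace_app_l; auto.
Qed.

Lemma line_spec_sound t p q x n y a b z (M : nat -> Prop) :
  (forall J, M J -> holds J) -> line_spec t p q x n y a b z M -> holds (judgement t p q x n y).
Proof.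
  intros HM H. rewrite holds_judgement. unfold line_spec in H.
  destruct t as [|[|[|t]]]; try tauto.
  - destruct p as [|[|[|[|[|p']]]]]; try (subst; constructor).
    destruct H as [Hb H].
    remember (S (S (S (S (S p')))) - (5 + 4 * pair a b)) as d.
    replace (S (S (S (S (S p'))))) with (5 + 4 * pair a b + d) by lia.
    destruct d as [|[|[|[|d]]]]; try tauto; rewrite decode_compound by lia.
    + destruct H as [H1 H2]. apply HM in H1, H2. rewrite holds_judgement in H1, H2.
      rewrite <- (pair_unpair y). constructor; auto.
    + destruct H as [H1 H2]. apply HM in H1, H2. rewrite holds_judgement in H1, H2.
      econstructor; eauto.
    + apply HM in H. rewrite holds_judgement in H. rewrite <- (pair_unpair x). constructor; auto.
    + apply HM in H. rewrite holds_judgement in H. constructor; auto.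
  - destruct n as [|n'].
    + apply HM in H. rewrite holds_judgement in H. constructor; auto.
    + destruct H as [H1 H2]. apply HM in H1, H2. rewrite holds_judgement in H1, H2.
      econstructor; eauto.
  - destruct H as [[-> H]|[H1 H2]].
    + apply HM in H. rewrite holds_judgement in H. constructor; auto.
    + apply HM in H1, H2. rewrite holds_judgement in H1, H2. econstructor; eauto.
Qed.

Lemma valid_trace_sound l : valid_trace l -> forall h, In h l -> holds (fst (unpair h)).
Proof.
  unfold valid_trace. induction l as [|h t IH]; cbn; [tauto|].
  intros [H1 H2] h' [<-|Hin]; auto.
  destruct (line_surj h) as (tg & p & q & x & n & y & a & b & z & ->).
  unfold line_ok in H1. rewrite ev_line_check in H1.
  unfold line. rewrite fst_unpair. eapply line_spec_sound; [|exact H1].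
  intros J [h' [Hh' <-]]. apply IH; auto.
Qed.

Lemma line_spec_compound q x n y a b z d M :
  line_spec 0 (5 + 4 * pair a b + d) q x n y a b z M <->
  match d with
  | 0 => M (judgement 0 a 0 x 0 (fst (unpair y))) /\ M (judgement 0 b 0 x 0 (snd (unpair y)))
  | 1 => M (judgement 0 b 0 x 0 z) /\ M (judgement 0 a 0 z 0 y)
  | 2 => M (judgement 1 a b (fst (unpair x)) (snd (unpair x)) y)
  | 3 => M (judgement 2 a 0 x 0 y)
  | _ => False end.
Proof.
  unfold line_spec.
  replace (5 + 4 * pair a b + d) with (S (S (S (S (S (4 * pair a b + d)))))) by lia.
  replace (S (S (S (S (S (4 * pair a b + d))))) - (5 + 4 * pair a b)) with d by lia.
  split; [tauto|]. intros H; split; [lia|exact H].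
Qed.

Lemma valid_trace_extend tg p q x n y a b z l : valid_trace l ->
  line_spec tg p q x n y a b z (fun J => in_trace J l) ->
  exists l', valid_trace l' /\ in_trace (judgement tg p q x n y) l'.
Proof.
  intros Hv Hs. exists (line tg p q x n y a b z :: l). split.
  - split; auto. unfold line_ok. rewrite ev_line_check. auto.
  - exists (line tg p q x n y a b z). split; [left; auto|]. apply fst_unpair.
Qed.

Lemma valid_trace_join tg p q x n y a b z J1 J2 l1 l2 :
  valid_trace l1 -> in_trace J1 l1 -> valid_trace l2 -> in_trace J2 l2 ->
  (forall M : nat -> Prop, M J1 -> M J2 -> line_spec tg p q x n y a b z M) ->
  exists l', valid_trace l' /\ in_trace (judgement tg p q x n y) l'.
Proof.
  intros V1 M1 V2 M2 H. apply (valid_trace_extend tg p q x n y a b z (l1 ++ l2)).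
  - apply valid_trace_app; auto.
  - apply H; [apply in_trace_app_l|apply in_trace_app_r]; auto.
Qed.

Lemma trace_complete :
  (forall c x y, evalR c x y -> forall e, decode e = c ->
      exists l, valid_trace l /\ in_trace (judgement 0 e 0 x 0 y) l) /\
  (forall f g x n y, rec_graph f g x n y -> forall a b, decode a = f -> decode b = g ->
      exists l, valid_trace l /\ in_trace (judgement 1 a b x n y) l) /\
  (forall f x n y, mu_from f x n y -> forall a q, decode a = f ->
      exists l, valid_trace l /\ in_trace (judgement 2 a q x n y) l).
Proof.
  apply eval_mutind.
  1-5: intros x e He; apply decode_inv in He; subst;
    apply (valid_trace_extend 0 _ 0 x 0 _ 0 0 0 nil); [exact I|reflexivity].
  - intros f g x a b _ IH1 _ IH2 e He. apply decode_inv in He.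
    destruct He as (a' & b' & -> & Ha & Hb).
    destruct (IH1 a' Ha) as (l1 & V1 & M1), (IH2 b' Hb) as (l2 & V2 & M2).
    apply (valid_trace_join _ _ _ _ _ _ a' b' 0 _ _ l1 l2 V1 M1 V2 M2).
    intros M H1 H2. apply line_spec_compound. unpair_simpl. auto.
  - intros f g x y z _ IH1 _ IH2 e He. apply decode_inv in He.
    destruct He as (a' & b' & -> & Ha & Hb).
    destruct (IH1 b' Hb) as (l1 & V1 & M1), (IH2 a' Ha) as (l2 & V2 & M2).
    apply (valid_trace_join _ _ _ _ _ _ a' b' y _ _ l1 l2 V1 M1 V2 M2).
    intros M H1 H2. apply line_spec_compound. auto.
  - intros f g x n y _ IH e He. apply decode_inv in He.
    destruct He as (a' & b' & -> & Ha & Hb).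
    destruct (IH a' b' Ha Hb) as (l1 & V1 & M1).
    apply (valid_trace_extend _ _ _ (pair x n) _ _ a' b' 0 l1 V1).
    apply line_spec_compound. unpair_simpl. auto.
  - intros f x y _ IH e He. apply decode_inv in He.
    destruct He as (a' & b' & -> & Ha).
    destruct (IH a' 0 Ha) as (l1 & V1 & M1).
    apply (valid_trace_extend _ _ _ _ _ _ a' b' 0 l1 V1).
    apply line_spec_compound. auto.
  - intros f g x y _ IH a b Ha Hb.
    destruct (IH a Ha) as (l1 & V1 & M1).
    apply (valid_trace_extend 1 a b x 0 y 0 0 0 l1); auto.
  - intros f g x n y z _ IH1 _ IH2 a b Ha Hb.
    destruct (IH1 a b Ha Hb) as (l1 & V1 & M1), (IH2 b Hb) as (l2 & V2 & M2).
    apply (valid_trace_join _ _ _ _ _ _ 0 0 y _ _ l1 l2 V1 M1 V2 M2).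
    intros M H1 H2. cbn. auto.
  - intros f x n _ IH a q Ha.
    destruct (IH a Ha) as (l1 & V1 & M1).
    apply (valid_trace_extend 2 a q x n n 0 0 0 l1); auto. left; auto.
  - intros f x n k y _ IH1 _ IH2 a q Ha.
    destruct (IH1 a Ha) as (l1 & V1 & M1), (IH2 a q Ha) as (l2 & V2 & M2).
    apply (valid_trace_join _ _ _ _ _ _ 0 0 k _ _ l1 l2 V1 M1 V2 M2).
    intros M H1 H2. cbn. auto.
Qed.

(* Kleene's normal form: on <e, <x, <y, d>>>, [kleene_T] tests that [d]
   codes a valid trace containing the judgement [psi e x y]. *)
Definition kleene_T : code :=
  let d := CComp CSnd (CComp CSnd CSnd) in
  and_test (CComp (all_list line_check) (CPair (const 0) d))
    (CComp in_trace_code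
       (CPair (mk_judgement (const 0) CFst (const 0) (CComp CFst CSnd) (const 0)
                            (CComp CFst (CComp CSnd CSnd))) d)).

Lemma kleene_normal_form e x y : psi e x y <-> exists d, ev kleene_T (pair e (pair x (pair y d))) = 0.
Proof.
  assert (Hvalid : forall l, ev (all_list line_check) (pair 0 (enc l)) = 0 <-> valid_trace l).
  { intros l. apply ev_all_list. intros; unfold line_ok; tauto. }
  unfold kleene_T, psi. cbv zeta. split.
  - intros H. destruct ((proj1 trace_complete) _ _ _ H e eq_refl) as (l & V & M).
    exists (enc l). rewrite ev_and_test. cbn [ev]. unpair_simpl. rewrite ev_const.
    split; [apply Hvalid; auto|]. apply ev_in_trace_code.
    unfold mk_judgement. cbn [ev]. unpair_simpl. rewrite !ev_const. exact M.
  - intros [d Hd]. destruct (enc_surj d) as [l <-].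
    rewrite ev_and_test in Hd. cbn [ev] in Hd. unpair_simpl_in Hd. rewrite !ev_const in Hd.
    destruct Hd as [H1 H2]. apply Hvalid in H1. apply ev_in_trace_code in H2.
    unfold mk_judgement in H2. cbn [ev] in H2. unpair_simpl_in H2. rewrite !ev_const in H2.
    destruct H2 as [h [Hin Hh]].
    change (pair 0 (pair e (pair 0 (pair x (pair 0 y))))) with (judgement 0 e 0 x 0 y) in Hh.
    pose proof (valid_trace_sound l H1 h Hin) as HS. rewrite Hh in HS.
    exact (proj1 (holds_judgement 0 e 0 x 0 y) HS).
Qed.

(* Parametrization (an explicit s-m-n function): [param_index s n k] is the
   number of the program [z |-> (decode s) <s, <n, <k, z>>>].  Passing [s]
   itself lets a program refer to its own code. *)

Definition param_index (s n k : nat) : nat :=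
  5 + 4 * pair s (encode (CPair (const s) (CPair (const n) (CPair (const k) CId)))) + 1.

Lemma psi_param_index s n k z y :
  psi (param_index s n k) z y <-> evalR (decode s) (pair s (pair n (pair k z))) y.
Proof.
  unfold psi, param_index. rewrite decode_compound, decode_encode by lia.
  assert (Hi : implements (CPair (const s) (CPair (const n) (CPair (const k) CId)))
                 (fun z => pair s (pair n (pair k z)))).
  { eapply implements_ext; [apply ev_correct; cbn; rewrite !mufree_const; reflexivity|].
    intros; cbn [ev]. rewrite !ev_const. reflexivity. }
  split.
  - intros H. inversion H; subst. apply (implements_det _ _ _ _ Hi) in H2. subst. auto.
  - intros H. econstructor; [apply Hi|exact H].
Qed.

Definition const_index_code : code :=
  CComp (CRec (const 0) (index_code 1 (const 1) (CComp CSnd CSnd))) (CPair (const 0) CId).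

Lemma ev_const_index_code n : ev const_index_code n = encode (const n).
Proof.
  unfold const_index_code. cbn [ev const]. unpair_simpl. induction n; cbn [rec_loop].
  - reflexivity.
  - rewrite ev_index_code. cbn [ev const encode]. unpair_simpl. rewrite IHn. reflexivity.
Qed.

Definition param_index_code (a b c : code) : code :=
  index_code 1 a (index_code 0 (CComp const_index_code a)
    (index_code 0 (CComp const_index_code b) (index_code 0 (CComp const_index_code c) (const 2)))).

Lemma ev_param_index_code a b c x :
  ev (param_index_code a b c) x = param_index (ev a x) (ev b x) (ev c x).
Proof.
  unfold param_index_code, param_index. rewrite !ev_index_code. cbn [ev encode].
  rewrite !ev_const_index_code, ev_const. reflexivity.
Qed.

Lemma mufree_param_index_code a b c :
  mufree a = true -> mufree b = true -> mufree c = true -> mufree (param_index_code a b c) = true.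
Proof. intros Ha Hb Hc. cbn. rewrite Ha, Hb, Hc. reflexivity. Qed.

Lemma Pi02_intro (A : nat -> Prop) (c : code) (F : nat -> nat) : implements c F ->
  (forall n, A n <-> forall x, exists y, F (pair n (pair x y)) = 0) -> Pi02 A.
Proof.
  intros Hc HA. exists c. split; [eapply implements_total; eauto|].
  intros n. rewrite HA. setoid_rewrite (implements_zero _ _ _ Hc). tauto.
Qed.

(* Halting with a witness: [halts_within e x w] says that [w] codes a result
   and a trace of [psi e x]; it is a mu-free test. *)
Definition halts_within (e x w : nat) : Prop :=
  ev kleene_T (pair e (pair x (pair (fst (unpair w)) (snd (unpair w))))) = 0.

Lemma halts_iff e x : (exists y, psi e x y) <-> exists w, halts_within e x w.
Proof.
  unfold halts_within. split.
  - intros [y Hy]. apply kleene_normal_form in Hy. destruct Hy as [d Hd].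
    exists (pair y d). unpair_simpl. auto.
  - intros [w Hw]. exists (fst (unpair w)). apply kleene_normal_form. eauto.
Qed.

Definition halts_code (gi xi wi : code) : code :=
  CComp kleene_T (CPair gi (CPair xi (CPair (CComp CFst wi) (CComp CSnd wi)))).

Lemma ev_halts_code gi xi wi z :
  ev (halts_code gi xi wi) z = 0 <-> halts_within (ev gi z) (ev xi z) (ev wi z).
Proof.
  assert (E : forall h, ev (CComp h (CPair gi (CPair xi (CPair (CComp CFst wi) (CComp CSnd wi))))) z =
    ev h (pair (ev gi z) (pair (ev xi z) (pair (fst (unpair (ev wi z))) (snd (unpair (ev wi z)))))))
    by reflexivity.
  unfold halts_code, halts_within. rewrite E. reflexivity.
Qed.

Section UpperBound.
Variables (phi : numbering) (g : code) (G : nat -> nat).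
Hypothesis g_computes : implements g G.
Hypothesis G_translates : forall e x y, psi (G e) x y <-> phi e x y.

Lemma W_halts e x : W phi e x <-> exists w, halts_within (G e) x w.
Proof. unfold W. rewrite <- halts_iff. split; intros [y Hy]; exists y; apply G_translates; auto. Qed.

Lemma W_CE e : CE (W phi e).
Proof. exists (G e). intros x. rewrite halts_iff. apply W_halts. Qed.

Lemma Tot_Pi02 : Pi02 (Tot phi).
Proof.
  set (pre := CPair (CComp g CFst) (CPair (CComp CFst CSnd) (CComp CSnd CSnd))).
  set (test := halts_code CFst (CComp CFst CSnd) (CComp CSnd CSnd)).
  assert (Hpre : implements pre (fun z => pair (G (fst (unpair z))) (snd (unpair z)))).
  { eapply implements_ext.
    - apply implements_pair; [apply implements_comp; [exact g_computes|apply ev_correct; reflexivity]|].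
      apply ev_correct; reflexivity.
    - intros z. cbn [ev]. rewrite pair_unpair. reflexivity. }
  apply (Pi02_intro _ _ _ (implements_comp _ _ _ _ (ev_correct test eq_refl) Hpre)).
  intros e. unfold Tot. split; intros Hx x.
  - destruct (proj1 (W_halts e x) (Hx x)) as [w Hw]. exists w.
    apply ev_halts_code. cbn [ev]. unpair_simpl. exact Hw.
  - destruct (Hx x) as [w Hw]. unpair_simpl_in Hw.
    apply (proj1 (ev_halts_code _ _ _ _)) in Hw. cbn [ev] in Hw. unpair_simpl_in Hw.
    apply W_halts. eauto.
Qed.

(* Self-constructedness of [W phi e] as a Pi^0_2 condition in terms of an
   arbitrary "halts with witness" predicate [H]: quantify over an element
   [a] and a candidate [x] with witnesses [w1], [w2], and ask for witnesses
   [w0] (nonemptiness), [w3], [w4] (the two inclusions). *)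
Lemma self_constructing_shape (Wx : nat -> nat -> Prop) (H : nat -> nat -> nat -> Prop) e :
  (forall e x, Wx e x <-> exists w, H e x w) ->
  ((exists a, Wx e a) /\ (forall a, Wx e a -> forall x, Wx a x <-> Wx e x)) <->
  (forall a x w1 w2, exists w0 w3 w4,
     H e (fst (unpair w0)) (snd (unpair w0)) /\
     (H e a w1 /\ H a x w2 -> H e x w3) /\ (H e a w1 /\ H e x w2 -> H a x w4)).
Proof.
  intros HW. split.
  - intros [[a0 Ha0] Hall] a x w1 w2.
    apply HW in Ha0. destruct Ha0 as [wa Hwa].
    assert (E3 : exists w3, H e a w1 /\ H a x w2 -> H e x w3).
    { destruct (classic (H e a w1 /\ H a x w2)) as [[H1 H2]|Hn]; [|exists 0; tauto].
      assert (Hx : Wx e x) by (apply (Hall a); apply HW; eauto).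
      apply HW in Hx. destruct Hx as [w3 Hw3]. eauto. }
    assert (E4 : exists w4, H e a w1 /\ H e x w2 -> H a x w4).
    { destruct (classic (H e a w1 /\ H e x w2)) as [[H1 H2]|Hn]; [|exists 0; tauto].
      assert (Hx : Wx a x) by (apply (Hall a); apply HW; eauto).
      apply HW in Hx. destruct Hx as [w4 Hw4]. eauto. }
    destruct E3 as [w3 E3], E4 as [w4 E4].
    exists (pair a0 wa), w3, w4. unpair_simpl. auto.
  - intros Hm. split.
    + destruct (Hm 0 0 0 0) as (w0 & _ & _ & Hw0 & _). exists (fst (unpair w0)). apply HW; eauto.
    + intros a Ha x. apply HW in Ha. destruct Ha as [w1 Hw1].
      rewrite !HW. split; intros [w2 Hw2]; destruct (Hm a x w1 w2) as (w0 & w3 & w4 & _ & H3 & H4);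
        eauto.
Qed.

(* The matrix of [self_constructing_shape], as a test on
   <G e, <G a, <e, <u, v>>>> with u = <a, <x, <w1, w2>>>, v = <w0, <w3, w4>>. *)
Definition sc_matrix : code :=
  let ge := CFst in
  let ga := CComp CFst CSnd in
  let u := CComp CFst (CComp CSnd (CComp CSnd CSnd)) in
  let v := CComp CSnd (CComp CSnd (CComp CSnd CSnd)) in
  let a := CComp CFst u in
  let x := CComp CFst (CComp CSnd u) in
  let w1 := CComp CFst (CComp CSnd (CComp CSnd u)) in
  let w2 := CComp CSnd (CComp CSnd (CComp CSnd u)) in
  let w0 := CComp CFst v in
  let w3 := CComp CFst (CComp CSnd v) in
  let w4 := CComp CSnd (CComp CSnd v) in
  and_test (halts_code ge (CComp CFst w0) (CComp CSnd w0))
  (and_test (or_test (not_test (and_test (halts_code ge a w1) (halts_code ga x w2))) (halts_code ge x w3))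
            (or_test (not_test (and_test (halts_code ge a w1) (halts_code ge x w2))) (halts_code ga x w4))).

Lemma ev_sc_matrix ge ga e a x w1 w2 w0 w3 w4 :
  ev sc_matrix (pair ge (pair ga (pair e (pair (pair a (pair x (pair w1 w2))) (pair w0 (pair w3 w4)))))) = 0
  <-> halts_within ge (fst (unpair w0)) (snd (unpair w0)) /\
      (halts_within ge a w1 /\ halts_within ga x w2 -> halts_within ge x w3) /\
      (halts_within ge a w1 /\ halts_within ge x w2 -> halts_within ga x w4).
Proof.
  unfold sc_matrix. cbv zeta.
  rewrite !ev_and_test, !ev_or_test, !ev_not_test, !ev_and_test, !ev_halts_code.
  cbn [ev]. unpair_simpl.
  pose proof (classic (halts_within ge a w1 /\ halts_within ga x w2)).
  pose proof (classic (halts_within ge a w1 /\ halts_within ge x w2)).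
  tauto.
Qed.

(* [self_constructing_shape] for [W phi e]; c.e.-ness is automatic. *)
Lemma S_set_shape e : S_set phi e <->
  (forall a x w1 w2, exists w0 w3 w4,
     halts_within (G e) (fst (unpair w0)) (snd (unpair w0)) /\
     (halts_within (G e) a w1 /\ halts_within (G a) x w2 -> halts_within (G e) x w3) /\
     (halts_within (G e) a w1 /\ halts_within (G e) x w2 -> halts_within (G a) x w4)).
Proof.
  rewrite <- (self_constructing_shape (W phi) (fun e => halts_within (G e)) e W_halts).
  unfold S_set, self_constructing. pose proof (W_CE e). tauto.
Qed.

Lemma S_set_Pi02 : Pi02 (S_set phi).
Proof.
  set (pre := CPair (CComp g CFst) (CPair (CComp g (CComp CFst (CComp CFst CSnd))) CId)).
  assert (Hpre : implements pre (fun z => pair (G (fst (unpair z)))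
        (pair (G (fst (unpair (fst (unpair (snd (unpair z))))))) z))).
  { apply implements_pair; [|apply implements_pair];
      try (apply implements_comp; [exact g_computes|]); apply ev_correct; reflexivity. }
  apply (Pi02_intro _ _ _ (implements_comp _ _ _ _ (ev_correct sc_matrix eq_refl) Hpre)).
  intros e. rewrite S_set_shape. split.
  - intros Hm u.
    rewrite <- (pair_unpair u), <- (pair_unpair (snd (unpair u))),
      <- (pair_unpair (snd (unpair (snd (unpair u))))).
    set (a := fst (unpair u)). set (x := fst (unpair (snd (unpair u)))).
    set (w1 := fst (unpair (snd (unpair (snd (unpair u)))))).
    set (w2 := snd (unpair (snd (unpair (snd (unpair u)))))).
    destruct (Hm a x w1 w2) as (w0 & w3 & w4 & Hw).
    exists (pair w0 (pair w3 w4)). unpair_simpl. apply ev_sc_matrix. exact Hw.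
  - intros Hm a x w1 w2.
    destruct (Hm (pair a (pair x (pair w1 w2)))) as [v Hv].
    rewrite <- (pair_unpair v), <- (pair_unpair (snd (unpair v))) in Hv.
    unpair_simpl_in Hv. apply ev_sc_matrix in Hv.
    exists (fst (unpair v)), (fst (unpair (snd (unpair v)))), (snd (unpair (snd (unpair v)))).
    exact Hv.
Qed.
End UpperBound.

Lemma self_constructing_family (phi : numbering) (P : nat -> nat) (Q : nat -> Prop) :
  (forall k x, W phi (P k) x <-> Q k /\ exists j, x = P j) -> CE (W phi (P 0)) ->
  ((forall k, Q k) <-> S_set phi (P 0)).
Proof.
  intros HW HCE. split.
  - intros HQ.
    assert (HX : forall k x, W phi (P k) x <-> exists j, x = P j).
    { intros k x. rewrite HW. specialize (HQ k). tauto. }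
    split; [|split; [exact HCE|]].
    + exists (P 0). apply HX. eauto.
    + intros e He x. apply HX in He. destruct He as [j ->]. rewrite !HX. tauto.
  - intros [[a Ha] [_ Hall]] k. apply NNPP. intros Hk.
    assert (Hin : W phi (P 0) (P k)).
    { apply HW. split; [apply (proj1 (proj1 (HW 0 a) Ha))|eauto]. }
    apply (Hall _ Hin a), HW in Ha. tauto.
Qed.

Section LowerBound.
Variables (c f : code) (R F : nat -> nat).
Hypothesis c_computes : implements c R.
Hypothesis f_computes : implements f F.

Definition search_test : code :=
  let s := CComp CFst CFst in
  let n := CComp CFst (CComp CSnd CFst) in
  let k := CComp CFst (CComp CSnd (CComp CSnd CFst)) in
  let z := CComp CSnd (CComp CSnd (CComp CSnd CFst)) in
  let y := CComp CFst CSnd in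
  let j := CComp CSnd CSnd in
  CComp (and_test CFst (eq_test (CComp CFst CSnd) (CComp CSnd CSnd)))
        (CPair (CComp c (CPair n (CPair k y))) (CPair z (CComp f (param_index_code s n j)))).

Definition search_function (u : nat) : nat :=
  let s := fst (unpair (fst (unpair u))) in
  let n := fst (unpair (snd (unpair (fst (unpair u))))) in
  let k := fst (unpair (snd (unpair (snd (unpair (fst (unpair u))))))) in
  let z := snd (unpair (snd (unpair (snd (unpair (fst (unpair u))))))) in
  let y := fst (unpair (snd (unpair u))) in
  let j := snd (unpair (snd (unpair u))) in
  ev (and_test CFst (eq_test (CComp CFst CSnd) (CComp CSnd CSnd)))
     (pair (R (pair n (pair k y))) (pair z (F (param_index s n j)))).

Lemma search_test_computes : implements search_test search_function.
Proof.
  unfold search_test, search_function. cbv zeta.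
  apply implements_comp; [apply ev_correct; reflexivity|].
  apply implements_pair; [|apply implements_pair].
  - apply (implements_comp _ _ _ (fun u => pair _ (pair _ _)) c_computes), ev_correct.
    reflexivity.
  - apply ev_correct. reflexivity.
  - eapply implements_ext.
    + apply implements_comp; [exact f_computes|].
      apply ev_correct, mufree_param_index_code; reflexivity.
    + intros u. cbv beta. rewrite ev_param_index_code. reflexivity.
Qed.

Lemma search_function_zero s n k z y j :
  search_function (pair (pair s (pair n (pair k z))) (pair y j)) = 0 <->
  R (pair n (pair k y)) = 0 /\ z = F (param_index s n j).
Proof.
  unfold search_function. cbv zeta. unpair_simpl.
  rewrite ev_and_test, ev_eq_test. cbn [ev]. unpair_simpl. tauto.
Qed.

Definition family (n k : nat) : nat := param_index (encode (CMu search_test)) n k.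

Lemma family_halts n k z : (exists y, psi (family n k) z y) <->
  (exists y, R (pair n (pair k y)) = 0) /\ (exists j, z = F (family n j)).
Proof.
  unfold family. set (s := encode (CMu search_test)).
  setoid_rewrite psi_param_index. unfold s at 1. rewrite decode_encode.
  rewrite (mu_halts _ _ _ search_test_computes). split.
  - intros [w Hw]. rewrite <- (pair_unpair w) in Hw. apply search_function_zero in Hw.
    destruct Hw as [Hy Hj]. split; eauto.
  - intros [[y Hy] [j Hj]]. exists (pair y j). apply search_function_zero. auto.
Qed.
End LowerBound.

Lemma Pi02_hard (phi : numbering) (f : code) (F : nat -> nat) (A : nat -> Prop) :
  implements f F -> (forall e x y, phi (F e) x y <-> psi e x y) ->
  Pi02 A -> many_one A (S_set phi).
Proof.
  intros Hf HF [c [Hct Hc]].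
  destruct (total_function c Hct) as [R HR].
  set (red := CComp f (param_index_code (const (encode (CMu (search_test c f)))) CId (const 0))).
  assert (Hred : implements red (fun n => F (family c f n 0))).
  { eapply implements_ext.
    - apply implements_comp; [exact Hf|].
      apply ev_correct, mufree_param_index_code; [apply mufree_const|reflexivity|reflexivity].
    - intros n. cbv beta. rewrite ev_param_index_code. cbn [ev]. rewrite !ev_const. reflexivity. }
  exists red. split; [eapply implements_total; eauto|].
  intros n. exists (F (family c f n 0)). split; [apply Hred|].
  assert (HWF : forall e x, W phi (F e) x <-> exists y, psi e x y).
  { intros e x. unfold W. split; intros [y Hy]; exists y; apply HF; auto. }
  rewrite Hc. setoid_rewrite (implements_zero _ _ _ HR).
  apply (self_constructing_family phi (fun k => F (family c f n k))).
  - intros k x. rewrite HWF. apply family_halts; auto.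
  - exists (family c f n 0). intros x. rewrite HWF. tauto.
Qed.

Theorem mainTheorem8 :
  forall phi : numbering, acceptable phi ->
    (Pi02 (S_set phi) /\
     (forall A : nat -> Prop, Pi02 A -> many_one A (S_set phi))) /\
    many_one (Tot phi) (S_set phi).
Proof.
  intros phi [_ [[f [Hft Hf]] [g [Hgt Hg]]]].
  destruct (total_function f Hft) as [F HF], (total_function g Hgt) as [G HG].
  assert (F_translates : forall e x y, phi (F e) x y <-> psi e x y).
  { intros e. destruct (Hf e) as [e' [He' H]]. rewrite (implements_det _ _ _ _ HF He') in H. exact H. }
  assert (G_translates : forall e x y, psi (G e) x y <-> phi e x y).
  { intros e. destruct (Hg e) as [e' [He' H]]. rewrite (implements_det _ _ _ _ HG He') in H. exact H. }
  split; [split|].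
  - exact (S_set_Pi02 phi g G HG G_translates).
  - intros A HA. exact (Pi02_hard phi f F A HF F_translates HA).
  - exact (Pi02_hard phi f F _ HF F_translates (Tot_Pi02 phi g G HG G_translates)).
Qed.
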